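(* Let $n,m\ge 3$ and let $G=P_n\square P_m$ be the grid graph. A set $M$ of three vertices of $G$ is a $3$-minimal if and only if all of the following hold: (i) $M$ contains at most one corner vertex; (ii) $M$ contains two boundary vertices lying on opposite sides of the grid; (iii) either $M$ consists of two vertices $(i,j)$ and $(k,j)$ on the same line with $i\neq k$ together with a third vertex $(p,q)$ with $i\le p\le k$ and $q\neq j$, or $M$ consists of two vertices $(i,j)$ and $(i,k)$ on the same line with $j\neq k$ together with a third vertex $(p,q)$ with $j\le q\le k$ and $p\neq i$.
   Context: The grid graph $P_n\square P_m$ has vertex set $\{(i,j):0\le i\le n-1,\ 0\le j\le m-1\}$, with $(i,j)$ adjacent to $(k,l)$ iff $|i-k|+|j-l|=1$; the distance is $d((i,j),(k,l))=|i-k|+|j-l|$. The first coordinate is called the horizontal coordinate and the second the vertical coordinate. A vertex $w$ resolves two vertices $u,v$ if $d(w,u)\ne d(w,v)$. A set $R$ of vertices is resolving if every pair of distinct vertices is resolved by some vertex of $R$. A minimal is a resolving set $R$ such that no $R\setminus\{v\}$, $v\in R$, is resolving; a $k$-minimal is a minimal of cardinality $k$. Corner vertices are those of degree 2, side vertices those of degree 3, interior vertices those of degree 4; boundary vertices are corner or side vertices. A horizontal line is the set of all vertices with a fixed vertical coordinate, a vertical line the set of all vertices with a fixed horizontal coordinate; two vertices are on the same line if they share a coordinate. The sides of the grid are the four lines with first coordinate $0$, first coordinate $n-1$, second coordinate $0$, second coordinate $m-1$; two sides are opposite if they share no vertex (i.e. first coordinate $0$ and $n-1$, or second coordinate $0$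 and $m-1$). ''Two boundary vertices on opposite sides'' means one lies on a side and the other on the opposite side. *)

From mathcomp Require Import all_boot all_order.
Set Implicit Arguments. Unset Strict Implicit. Unset Printing Implicit Defensive.

Section Grid.
Variables n m : nat.
Definition vertex := ('I_n * 'I_m)%type.

Definition absdiff (a b : nat) : nat := (a - b) + (b - a).

Definition gdist (u v : vertex) : nat :=
  absdiff u.1 v.1 + absdiff u.2 v.2.

Definition gadj (u v : vertex) : bool := gdist u v == 1.

Definition gdeg (u : vertex) : nat := #|[set v : vertex | gadj u v]|.

Definition corner (u : vertex) : bool := gdeg u == 2.
Definition side_vertex (u : vertex) : bool := gdeg u == 3.
Definition boundary (u : vertex) : bool := corner u || side_vertex u.

Definition resolves (w u v : vertex) : bool := gdist w u != gdist w v.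

Definition resolving (R : {set vertex}) : Prop :=
  forall u v : vertex, u <> v -> exists2 w, w \in R & resolves w u v.

Definition minimal (R : {set vertex}) : Prop :=
  resolving R /\ forall v, v \in R -> ~ resolving (R :\ v).

Definition k_minimal (k : nat) (R : {set vertex}) : Prop :=
  minimal R /\ #|R| = k.

Definition opposite_boundary (u v : vertex) : Prop :=
  boundary u /\ boundary v /\
  (((nat_of_ord u.1 = 0) /\ (nat_of_ord v.1 = n.-1)) \/
   ((nat_of_ord u.2 = 0) /\ (nat_of_ord v.2 = m.-1))).

Definition cond_i (M : {set vertex}) : Prop :=
  #|[set x in M | corner x]| <= 1.

Definition cond_ii (M : {set vertex}) : Prop :=
  exists u v, [/\ u \in M, v \in M & opposite_boundary u v].

Definition cond_iii (M : {set vertex}) : Prop :=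
  (exists (i k p : 'I_n) (j q : 'I_m),
      [/\ i != k, M = [set (i, j); (k, j); (p, q)],
          i <= p <= k & q != j]) \/
  (exists (i p : 'I_n) (j k q : 'I_m),
      [/\ j != k, M = [set (i, j); (i, k); (p, q)],
          j <= q <= k & p != i]).
End Grid.

From mathcomp Require Import all_boot all_order zify.

(* Resolvability in the grid is governed by three families of pairs: (s+1, r) and
   (s, r+1) are separated only by vertices w with (s < w.1) <> (r < w.2), (s+1, r+1)
   and (s, r) only by those with (s < w.1) = (r < w.2), and (t-1, 0), (t+1, 0) only
   by vertices off column t.  Used near the four corners, this makes every resolving
   set meet two opposite sides, and a resolving set lying on one line contain two
   corners; used around the leftmost and rightmost vertices of a resolving triple with
   at most one corner, it yields the shape (iii).  Conversely, the landmarks (i, j)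
   and (k, j) recover the column of any vertex between columns i and k, and the
   opposite-side condition lets (p, q) settle the remaining cases.  Minimality holds
   because a resolving pair consists of two corners, and fails with two corners:
   corners on a common side already resolve the grid, while opposite corners have
   constant distance sum, so either one is redundant. *)

Set Implicit Arguments. Unset Strict Implicit. Unset Printing Implicit Defensive.

Lemma sum_ord_eq (n k : nat) : \sum_(i < n) (i == k :> nat) = (k < n).
Proof.
case: ltnP => [kn | nk].
  by rewrite (bigD1 (Ordinal kn)) //= eqxx big1 // => i /negbTE; rewrite -val_eqE => ->.
by rewrite big1 // => i; case: eqP => // ik; have := ltn_ord i; lia.
Qed.

Lemma sum_ord_absdiff1 (k : nat) (a : 'I_k) :
  \sum_(i < k) (absdiff a i == 1) = (0 < a) + (a.+1 < k).
Proof.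
have -> : (0 < a : nat) = \sum_(i < k) (i == a.-1 :> nat) && (0 < a).
  case: (posnP a) => [->|a_gt0]; first by rewrite big1 // => i; rewrite andbF.
  under eq_bigr do rewrite andbT; rewrite sum_ord_eq; have := ltn_ord a; lia.
rewrite -sum_ord_eq -big_split; apply: eq_bigr => i _.
by rewrite /absdiff; do !case: eqP => /=; lia.
Qed.

Section Set3.
Variables (T : finType) (a b c : T).

Lemma set3P x : reflect [\/ x = a, x = b | x = c] (x \in [set a; b; c]).
Proof.
rewrite !inE -orbA; apply: (iffP or3P) => -[] /eqP ->;
  by [constructor 1 | constructor 2 | constructor 3].
Qed.

Lemma set3C12 : [set a; b; c] = [set b; a; c].
Proof. by rewrite [[set a; b]]setUC. Qed.

Lemma set3C23 : [set a; b; c] = [set a; c; b].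
Proof. exact: setUAC. Qed.

End Set3.

Lemma cards3P (T : finType) (A : {set T}) : #|A| = 3 -> exists a b c, A = [set a; b; c].
Proof.
move=> A3; have /card_gt2P[a [b [c [[aA bA cA] distinct]]]] : 2 < #|A| by rewrite A3.
exists a, b, c; apply/esym/eqP; rewrite eqEcard A3.
apply/andP; split; first by apply/subsetP => x /set3P[]->.
by apply/card_gt2P; exists a, b, c; rewrite !inE !eqxx ?orbT.
Qed.

Lemma cards3_neq (T : finType) (a b c : T) :
  #|[set a; b; c]| = 3 -> [/\ a != b, a != c & b != c].
Proof.
rewrite [[set a; b; c]]setUC !cardsU1 cards1 !inE negb_or ![c == _]eq_sym.
by case: eqP; case: eqP; case: eqP.
Qed.

Lemma set3_sorted (T : finType) (f : T -> nat) (a b c : T) :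
  exists x y z, [set a; b; c] = [set x; y; z] /\ f x <= f y <= f z.
Proof.
wlog le_ab : a b / f a <= f b.
  move=> wlog_ab; case: (leqP (f a) (f b)) => [|/ltnW] le; first exact: wlog_ab.
  by rewrite set3C12; apply: wlog_ab.
case: (leqP (f b) (f c)) => [le_bc | lt_cb]; first by exists a, b, c; rewrite le_ab le_bc.
case: (leqP (f a) (f c)) => [le_ac | lt_ca].
  by exists a, c, b; rewrite set3C23 le_ac ltnW.
by exists c, a, b; rewrite set3C23 set3C12 ltnW.
Qed.

Lemma absdiff_cancel2 (i k x x' : nat) : i < k ->
  absdiff i x + absdiff k x' = absdiff i x' + absdiff k x ->
  x = x' \/ (x <= i /\ x' <= i) \/ (k <= x /\ k <= x').
Proof. rewrite /absdiff; lia. Qed.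

Lemma absdiff_inj2 (j q y y' : nat) : j != q ->
  absdiff j y = absdiff j y' -> absdiff q y = absdiff q y' -> y = y'.
Proof. rewrite /absdiff; lia. Qed.

Lemma absdiff0n a : absdiff 0 a = a.
Proof. by rewrite /absdiff sub0n subn0. Qed.

Lemma absdiff_l a b : b <= a -> absdiff a b = a - b.
Proof. by rewrite /absdiff => /eqP->; rewrite addn0. Qed.

Lemma absdiff_r a b : a <= b -> absdiff a b = b - a.
Proof. by rewrite /absdiff => /eqP->. Qed.

Lemma landmarks_determine (n m i k p j q x y x' y' : nat) :
  x < n -> x' < n -> y < m -> y' < m ->
  i < k -> i <= p <= k -> q != j ->
  (i = 0 /\ k = n.-1) \/ (j = 0 /\ q = m.-1) \/ (j = m.-1 /\ q = 0) ->
  absdiff i x + absdiff j y = absdiff i x' + absdiff j y' ->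
  absdiff k x + absdiff j y = absdiff k x' + absdiff j y' ->
  absdiff p x + absdiff q y = absdiff p x' + absdiff q y' ->
  x = x' /\ y = y'.
Proof.
(* Subtracting the first two equations pins x = x' unless both lie outside the
   open interval (i, k) on the same side; there the side condition makes the
   third landmark decisive. *)
move=> x_n x'_n y_m y'_m ik ipk qj sides e1 e2 e3.
have e12 : absdiff i x + absdiff k x' = absdiff i x' + absdiff k x by lia.
suff xx : x = x'.
  by split=> //; subst x'; apply: (absdiff_inj2 qj); [exact: addnI e3 | exact: addnI e1].
have [ym y'm] : y <= m.-1 /\ y' <= m.-1 by clear -y_m y'_m; lia.
have [// | [[xi x'i] | [kx kx']]] := absdiff_cancel2 ik e12.
- have [xp x'p] : x <= p /\ x' <= p by clear -xi x'i ipk; lia.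
  move: e1 e3; rewrite !(absdiff_l xi, absdiff_l x'i, absdiff_l xp, absdiff_l x'p).
  case: sides => [[i0 _] | sides]; first by clear -i0 xi x'i; lia.
  by case: sides => -[-> ->]; rewrite !absdiff0n (absdiff_l ym) (absdiff_l y'm);
    clear -xi x'i xp x'p; lia.
- have [px px'] : p <= x /\ p <= x' by clear -kx kx' ipk; lia.
  move: e2 e3; rewrite !(absdiff_r kx, absdiff_r kx', absdiff_r px, absdiff_r px').
  case: sides => [[_ k1] | sides]; first by clear -k1 kx kx' x_n x'_n; lia.
  by case: sides => -[-> ->]; rewrite !absdiff0n (absdiff_l ym) (absdiff_l y'm);
    clear -kx kx' px px'; lia.
Qed.

Definition extreme (k i : nat) : bool := (i == 0) || (i == k.-1).

Section Grid.
Variables n m : nat.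
Implicit Types (a b c u v w x y : vertex n m) (R S : {set vertex n m}).

Lemma gdegE u :
  gdeg u = (0 < u.1) + (u.1.+1 < n) + ((0 < u.2) + (u.2.+1 < m)).
Proof.
rewrite -!sum_ord_absdiff1 /gdeg -sum1_card big_mkcond /=.
transitivity (\sum_(i < n) \sum_(j < m)
   ((absdiff u.1 i == 1) * (j == u.2 :> nat) + (i == u.1 :> nat) * (absdiff u.2 j == 1))).
  rewrite pair_bigA; apply: eq_bigr => -[i j] _; rewrite inE /gadj /gdist /=.
  by rewrite /absdiff; do !case: eqP => /=; lia.
rewrite (eq_bigr _ (fun i _ => big_split _ _ _ _ _)) big_split /= [X in _ + X]exchange_big /=.
under eq_bigr do rewrite -big_distrr /= sum_ord_eq ltn_ord muln1.
by under [X in _ + X]eq_bigr do rewrite -big_distrl /= sum_ord_eq ltn_ord mul1n.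
Qed.

Hypotheses (n_gt1 : 1 < n) (m_gt1 : 1 < m).

Lemma cornerE u : corner u = extreme n u.1 && extreme m u.2.
Proof.
rewrite /corner gdegE /extreme; have := ltn_ord u.1; have := ltn_ord u.2.
by do !case: eqP => /=; lia.
Qed.

Lemma boundaryE u : boundary u = extreme n u.1 || extreme m u.2.
Proof.
rewrite /boundary /corner /side_vertex gdegE /extreme; have := ltn_ord u.1; have := ltn_ord u.2.
by do !case: eqP => /=; lia.
Qed.

Lemma resolvingS R S : R \subset S -> resolving R -> resolving S.
Proof.
by move=> /subsetP RS resR u v /resR[w wR uv]; exists w; first exact: RS.
Qed.

Lemma vertex_eqE u v : (u == v) = (u.1 == v.1 :> nat) && (u.2 == v.2 :> nat).
Proof. by case: u v => [a b] [c d]. Qed.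

Lemma resolvingP R :
  resolving R <-> forall u v, (forall w, w \in R -> gdist w u = gdist w v) -> u = v.
Proof.
split=> [resR u v equi | sep u v uv].
  by case: (eqVneq u v) => // /eqP/resR[w /equi]; rewrite /resolves => ->; rewrite eqxx.
apply/exists_inP; apply: contraPT uv => /exists_inPn equi []; apply: sep => w /equi.
by rewrite negbK => /eqP.
Qed.

Section Separation.
Variables (R : {set vertex n m}) (s r : nat).
Hypotheses (resR : resolving R) (s_lt : s.+1 < n) (r_lt : r.+1 < m).

Let s_n : s < n. Proof. exact: ltnW. Qed.
Let r_m : r < m. Proof. exact: ltnW. Qed.

Lemma resolving_sep_antidiag : exists2 w : vertex n m, w \in R & (s < w.1) != (r < w.2).
Proof.
apply/exists_inP; apply: contraPT resR => /exists_inPn same /resolvingP sepR.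
suff : (Ordinal s_lt, Ordinal r_m) = (Ordinal s_n, Ordinal r_lt) by case; lia.
by apply: sepR => w /same; rewrite negbK /gdist /absdiff /=; lia.
Qed.

Lemma resolving_sep_diag : exists2 w : vertex n m, w \in R & (s < w.1) == (r < w.2).
Proof.
apply/exists_inP; apply: contraPT resR => /exists_inPn same /resolvingP sepR.
suff : (Ordinal s_lt, Ordinal r_lt) = (Ordinal s_n, Ordinal r_m) by case; lia.
by apply: sepR => w /same; rewrite /gdist /absdiff /=; lia.
Qed.

End Separation.

Lemma resolving_col_extreme R (t : 'I_n) :
  resolving R -> {in R, forall w, w.1 = t} -> extreme n t.
Proof.
move=> resR onR; apply: contraT; rewrite /extreme negb_or => /andP[t0 tN].
have t_lt := ltn_ord t; have t1_n : t.-1 < n by lia.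
have t2_n : t.+1 < n by lia.
have m_gt0 : 0 < m by lia.
suff : (Ordinal t1_n, Ordinal m_gt0) = (Ordinal t2_n, Ordinal m_gt0) by case; lia.
by move/resolvingP: resR; apply=> w /onR; rewrite /gdist /absdiff /= => ->; lia.
Qed.

Lemma resolving_row_extreme R (t : 'I_m) :
  resolving R -> {in R, forall w, w.2 = t} -> extreme m t.
Proof.
move=> resR onR; apply: contraT; rewrite /extreme negb_or => /andP[t0 tN].
have t_lt := ltn_ord t; have t1_m : t.-1 < m by lia.
have t2_m : t.+1 < m by lia.
have n_gt0 : 0 < n by lia.
suff : (Ordinal n_gt0, Ordinal t1_m) = (Ordinal n_gt0, Ordinal t2_m) by case; lia.
by move/resolvingP: resR; apply=> w /onR; rewrite /gdist /absdiff /= => ->; lia.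
Qed.

Lemma resolving_opposite_sides R : resolving R ->
  (exists2 u : vertex n m, u \in R & u.1 = 0 :> nat) /\
    (exists2 v : vertex n m, v \in R & v.1 = n.-1 :> nat) \/
  (exists2 u : vertex n m, u \in R & u.2 = 0 :> nat) /\
    (exists2 v : vertex n m, v \in R & v.2 = m.-1 :> nat).
Proof.
move=> resR.
have [n1 m1] : 0.+1 < n /\ 0.+1 < m by [].
have [n2 m2] : n.-2.+1 < n /\ m.-2.+1 < m by lia.
have [w1 w1R w1E] := resolving_sep_antidiag resR n1 m1.
have [w2 w2R w2E] := resolving_sep_diag resR n1 m2.
have [w3 w3R w3E] := resolving_sep_diag resR n2 m1.
have [w4 w4R w4E] := resolving_sep_antidiag resR n2 m2.
have := ltn_ord w1.1; have := ltn_ord w2.1; have := ltn_ord w3.1; have := ltn_ord w4.1.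
have := ltn_ord w1.2; have := ltn_ord w2.2; have := ltn_ord w3.2; have := ltn_ord w4.2.
move=> *.
have e1 : w1.1 = 0 :> nat \/ w1.2 = 0 :> nat by lia.
have e2 : w2.1 = 0 :> nat \/ w2.2 = m.-1 :> nat by lia.
have e3 : w3.1 = n.-1 :> nat \/ w3.2 = 0 :> nat by lia.
have e4 : w4.1 = n.-1 :> nat \/ w4.2 = m.-1 :> nat by lia.
have lift w (i j : nat) : w \in R -> w.1 = i :> nat \/ w.2 = j :> nat ->
    (exists2 u : vertex n m, u \in R & u.1 = i :> nat) \/
    (exists2 u : vertex n m, u \in R & u.2 = j :> nat).
  by move=> wR [] E; [left | right]; exists w.
move: (lift _ _ _ w1R e1) (lift _ _ _ w2R e2) (lift _ _ _ w3R e3) (lift _ _ _ w4R e4).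
tauto.
Qed.

Lemma resolving_cond_ii R : resolving R -> cond_ii R.
Proof.
case/resolving_opposite_sides => -[[u uR u0] [v vR v1]]; exists u, v;
  rewrite /opposite_boundary !boundaryE /extreme u0 v1 !eqxx ?orbT;
  do !split => //; by [left | right].
Qed.

Lemma resolving_col_corners R (t : 'I_n) : resolving R -> {in R, forall w, w.1 = t} ->
  exists x y, [/\ x \in R, y \in R & x != y] /\ corner x && corner y.
Proof.
move=> resR onR; have ext := resolving_col_extreme resR onR.
case: (resolving_opposite_sides resR) => -[[x xR x0] [y yR y1]].
  by move: x0 y1; rewrite (onR x xR) (onR y yR); lia.
exists x, y; split; first by split => //; apply/eqP => xy; move: y1; rewrite -xy x0; lia.
by rewrite !cornerE (onR x xR) (onR y yR) ext /extreme x0 y1 !eqxx orbT.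
Qed.

Lemma resolving_row_corners R (t : 'I_m) : resolving R -> {in R, forall w, w.2 = t} ->
  exists x y, [/\ x \in R, y \in R & x != y] /\ corner x && corner y.
Proof.
move=> resR onR; have ext := resolving_row_extreme resR onR.
case: (resolving_opposite_sides resR) => -[[x xR x0] [y yR y1]]; last first.
  by move: x0 y1; rewrite (onR x xR) (onR y yR); lia.
exists x, y; split; first by split => //; apply/eqP => xy; move: y1; rewrite -xy x0; lia.
by rewrite !cornerE (onR x xR) (onR y yR) ext /extreme x0 y1 !eqxx ?orbT.
Qed.

Lemma vertex_eq u v : u.1 = v.1 :> nat -> u.2 = v.2 :> nat -> u = v.
Proof. by move=> /val_inj e1 /val_inj e2; case: u v e1 e2 => ? ? [? ?] /= -> ->. Qed.

Lemma gdist_corner a u : corner a ->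
  gdist a u = (if a.1 == 0 :> nat then u.1 : nat else n.-1 - u.1)
            + (if a.2 == 0 :> nat then u.2 : nat else m.-1 - u.2).
Proof.
rewrite cornerE /extreme /gdist /absdiff => /andP[/orP[] /eqP-> /orP[] /eqP->];
by have := ltn_ord u.1; have := ltn_ord u.2; do !case: eqP; lia.
Qed.

Lemma corner_pair_resolving a b : corner a -> corner b -> a != b ->
  (a.1 == b.1 :> nat) || (a.2 == b.2 :> nat) -> resolving [set a; b].
Proof.
move=> ca cb ab same; apply/resolvingP => u v equi.
have := equi a (set21 a b); have := equi b (set22 a b); rewrite !gdist_corner //.
have [n0 m0] : (n.-1 == 0) = false /\ (m.-1 == 0) = false by split; apply/eqP; lia.
have := ltn_ord u.1; have := ltn_ord u.2; have := ltn_ord v.1; have := ltn_ord v.2.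
move: ca cb ab same; rewrite !cornerE /extreme vertex_eqE.
move=> /andP[/orP[]/eqP-> /orP[]/eqP->] /andP[/orP[]/eqP-> /orP[]/eqP->];
  by rewrite ?eqxx ?n0 ?m0 /= => *; apply: vertex_eq; lia.
Qed.

Lemma gdist_opposite_corners a b u : corner a -> corner b ->
  a.1 != b.1 :> nat -> a.2 != b.2 :> nat -> gdist a u + gdist b u = n.-1 + m.-1.
Proof.
move=> ca cb; rewrite !gdist_corner //; have := ltn_ord u.1; have := ltn_ord u.2.
have [n0 m0] : (n.-1 == 0) = false /\ (m.-1 == 0) = false by split; apply/eqP; lia.
move: ca cb; rewrite !cornerE /extreme.
by move=> /andP[/orP[]/eqP-> /orP[]/eqP->] /andP[/orP[]/eqP-> /orP[]/eqP->];
  rewrite ?eqxx ?n0 ?m0 /=; lia.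
Qed.

Lemma resolving_setD1_dominated R a b : a \in R -> a != b ->
  (forall u v, resolves b u v -> resolves a u v) -> resolving R -> resolving (R :\ b).
Proof.
move=> aR ab dom resR u v /resR[w wR res].
case: (eqVneq w b) => [wb | wb]; last by exists w; rewrite // !inE wb.
by exists a; [rewrite !inE aR ab | apply: dom; rewrite -wb].
Qed.

Lemma resolving_pair_corners a b : a != b -> resolving [set a; b] -> corner a && corner b.
Proof.
move=> ab resR.
wlog le_ab : a b ab resR / a.1 <= b.1.
  move=> wlog_ab; case: (leqP a.1 b.1) => [|/ltnW] le; first exact: wlog_ab.
  by rewrite andbC; apply: wlog_ab; [rewrite eq_sym | rewrite setUC |].
suff [x [y [[/set2P xab /set2P yab xy] /andP[cx cy]]]] :
    exists x y, [/\ x \in [set a; b], y \in [set a; b] & x != y] /\ corner x && corner y.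
  by case: xab yab xy cx cy => -> [] ->; rewrite ?eqxx // => _ -> ->.
have [eq1 | lt1] : a.1 = b.1 :> nat \/ a.1 < b.1 by lia.
  have onR : {in [set a; b], forall w, w.1 = a.1} by move=> w /set2P[]-> //; apply: ord_inj.
  exact: resolving_col_corners resR onR.
have := ltn_ord a.2; have := ltn_ord b.1; have := ltn_ord b.2 => *.
have a1_lt : a.1.+1 < n by lia.
have not_lt2 : ~ a.2 < b.2.
  move=> lt2; have a2_lt : a.2.+1 < m by lia.
  by have [w /set2P[]->] := resolving_sep_antidiag resR a1_lt a2_lt; lia.
have not_gt2 : ~ b.2 < a.2.
  move=> gt2; have b2_lt : b.2.+1 < m by lia.
  by have [w /set2P[]->] := resolving_sep_diag resR a1_lt b2_lt; lia.
have onR : {in [set a; b], forall w, w.2 = a.2} by move=> w /set2P[]-> //; apply: ord_inj; lia.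
exact: resolving_row_corners resR onR.
Qed.

Section Triples.
Variables a b c : vertex n m.
Hypothesis resR : resolving [set a; b; c].

Lemma leftmost_between : a.1 < b.1 -> a.1 < c.1 -> minn b.2 c.2 <= a.2 <= maxn b.2 c.2.
Proof.
move=> ab ac; have a1_lt : a.1.+1 < n by have := ltn_ord b.1; lia.
have := ltn_ord a.2; have := ltn_ord b.2; have := ltn_ord c.2 => *.
have not_below : ~ (a.2 < b.2 /\ a.2 < c.2).
  case=> ab2 ac2; have a2_lt : a.2.+1 < m by lia.
  by have [w /set3P[]->] := resolving_sep_antidiag resR a1_lt a2_lt; lia.
have not_above : ~ (b.2 < a.2 /\ c.2 < a.2).
  case=> ba2 ca2; have a2_lt : a.2.-1.+1 < m by lia.
  by have [w /set3P[]->] := resolving_sep_diag resR a1_lt a2_lt; lia.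
lia.
Qed.

Lemma rightmost_between : a.1 < c.1 -> b.1 < c.1 -> minn a.2 b.2 <= c.2 <= maxn a.2 b.2.
Proof.
move=> ac bc; have c1_lt : c.1.-1.+1 < n by have := ltn_ord c.1; lia.
have := ltn_ord a.2; have := ltn_ord b.2; have := ltn_ord c.2 => *.
have not_below : ~ (c.2 < a.2 /\ c.2 < b.2).
  case=> ca2 cb2; have c2_lt : c.2.+1 < m by lia.
  by have [w /set3P[]->] := resolving_sep_diag resR c1_lt c2_lt; lia.
have not_above : ~ (a.2 < c.2 /\ b.2 < c.2).
  case=> ac2 bc2; have c2_lt : c.2.-1.+1 < m by lia.
  by have [w /set3P[]->] := resolving_sep_antidiag resR c1_lt c2_lt; lia.
lia.
Qed.

End Triples.

Lemma cond_iii_row a b c : a.2 = b.2 -> a.1 != b.1 ->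
  minn a.1 b.1 <= c.1 <= maxn a.1 b.1 -> c.2 != a.2 -> cond_iii [set a; b; c].
Proof.
wlog lt_ab : a b / a.1 < b.1 => [wlog_ab e ne btw off | e _ btw off].
  case: (ltngtP a.1 b.1) => [lt | gt | eq]; first exact: wlog_ab.
    rewrite set3C12; apply: wlog_ab => //.
    - by rewrite eq_sym.
    - by rewrite minnC maxnC.
    - by rewrite -e.
  by rewrite (ord_inj eq) eqxx in ne.
left; exists a.1, b.1, c.1, a.2, c.2; split => //.
- by rewrite -val_eqE /= ltn_eqF.
- by rewrite {2}e -!surjective_pairing.
- by move: btw; rewrite (minn_idPl (ltnW lt_ab)) (maxn_idPr (ltnW lt_ab)).
Qed.

Lemma cond_iii_col a b c : a.1 = b.1 -> a.2 != b.2 ->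
  minn a.2 b.2 <= c.2 <= maxn a.2 b.2 -> c.1 != a.1 -> cond_iii [set a; b; c].
Proof.
wlog lt_ab : a b / a.2 < b.2 => [wlog_ab e ne btw off | e _ btw off].
  case: (ltngtP a.2 b.2) => [lt | gt | eq]; first exact: wlog_ab.
    rewrite set3C12; apply: wlog_ab => //.
    - by rewrite eq_sym.
    - by rewrite minnC maxnC.
    - by rewrite -e.
  by rewrite (ord_inj eq) eqxx in ne.
right; exists a.1, c.1, a.2, b.2, c.2; split => //.
- by rewrite -val_eqE /= ltn_eqF.
- by rewrite {2}e -!surjective_pairing.
- by move: btw; rewrite (minn_idPl (ltnW lt_ab)) (maxn_idPr (ltnW lt_ab)).
Qed.

Lemma cond_iP R : cond_i R <-> {in R &, forall x y, corner x -> corner y -> x = y}.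
Proof.
split=> [/card_le1_eqP one x y xR yR cx cy | one]; first by apply: one; rewrite inE ?xR ?yR.
by apply/card_le1_eqP => x y; rewrite !inE => /andP[xR cx] /andP[yR cy]; apply: one.
Qed.

Lemma resolving3_cond_iii a b c : a.1 <= b.1 <= c.1 -> #|[set a; b; c]| = 3 ->
  cond_i [set a; b; c] -> resolving [set a; b; c] -> cond_iii [set a; b; c].
Proof.
move=> /andP[le_ab le_bc] /cards3_neq[ab ac bc] /cond_iP one resR.
have no_two_corners : ~ exists x y,
    [/\ x \in [set a; b; c], y \in [set a; b; c] & x != y] /\ corner x && corner y.
  by case=> x [y [[xM yM /eqP xy] /andP[cx cy]]]; apply/xy/one.
have [lt_ab | eq_ab] : a.1 < b.1 \/ a.1 = b.1 :> nat by lia.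
all: have [lt_bc | eq_bc] : b.1 < c.1 \/ b.1 = c.1 :> nat by lia.
- have row : a.2 = c.2.
    apply: ord_inj; have := leftmost_between resR lt_ab (ltn_trans lt_ab lt_bc).
    by have := rightmost_between resR (ltn_trans lt_ab lt_bc) lt_bc; lia.
  rewrite set3C23; apply: cond_iii_row => //.
  + by rewrite -val_eqE /= ltn_eqF // (ltn_trans lt_ab lt_bc).
  + by apply/andP; lia.
  apply/eqP => b_row; apply/no_two_corners/(resolving_row_corners (t := a.2) resR).
  by move=> w /set3P[]->.
- rewrite set3C12 set3C23; apply: cond_iii_col; first exact: ord_inj eq_bc.
  + by apply: contra_neq bc => e2; apply/eqP; rewrite vertex_eqE e2 eq_bc !eqxx.
  + by apply: (leftmost_between resR); lia.
  + by rewrite -val_eqE /= ltn_eqF.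
- apply: cond_iii_col; first exact: ord_inj eq_ab.
  + by apply: contra_neq ab => e2; apply/eqP; rewrite vertex_eqE e2 eq_ab !eqxx.
  + by apply: (rightmost_between resR); lia.
  + by rewrite -val_eqE /= gtn_eqF //; lia.
- exfalso; apply/no_two_corners/(resolving_col_corners (t := a.1) resR).
  by move=> w /set3P[]-> //; apply: ord_inj; lia.
Qed.

Lemma row_landmarks_resolving (i k p : 'I_n) (j q : 'I_m) :
  i < k -> i <= p <= k -> q != j ->
  (i = 0 :> nat /\ k = n.-1 :> nat) \/ (j = 0 :> nat /\ q = m.-1 :> nat) \/
    (j = m.-1 :> nat /\ q = 0 :> nat) ->
  resolving [set (i, j); (k, j); (p, q)].
Proof.
move=> ik ipk qj sides; apply/resolvingP => x y equi.
have := equi (i, j); have := equi (k, j); have := equi (p, q); rewrite !inE !eqxx ?orbT.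
rewrite /gdist /= => /(_ isT) e3 /(_ isT) e2 /(_ isT) e1.
have qj' : (q : nat) != j by rewrite val_eqE.
have [e1' e2'] := landmarks_determine (ltn_ord x.1) (ltn_ord y.1) (ltn_ord x.2) (ltn_ord y.2)
  ik ipk qj' sides e1 e2 e3.
exact: vertex_eq.
Qed.

Lemma col_landmarks_resolving (i p : 'I_n) (j k q : 'I_m) :
  j < k -> j <= q <= k -> p != i ->
  (j = 0 :> nat /\ k = m.-1 :> nat) \/ (i = 0 :> nat /\ p = n.-1 :> nat) \/
    (i = n.-1 :> nat /\ p = 0 :> nat) ->
  resolving [set (i, j); (i, k); (p, q)].
Proof.
move=> jk jqk pi sides; apply/resolvingP => x y equi.
have := equi (i, j); have := equi (i, k); have := equi (p, q); rewrite !inE !eqxx ?orbT.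
rewrite /gdist /= ![absdiff _ x.1 + _]addnC ![absdiff _ y.1 + _]addnC.
move=> /(_ isT) e3 /(_ isT) e2 /(_ isT) e1.
have pi' : (p : nat) != i by rewrite val_eqE.
have [e2' e1'] := landmarks_determine (ltn_ord x.2) (ltn_ord y.2) (ltn_ord x.1) (ltn_ord y.1)
  jk jqk pi' sides e1 e2 e3.
exact: vertex_eq.
Qed.

Lemma cond_iii_resolving R : cond_ii R -> cond_iii R -> resolving R.
Proof.
move=> [u [v [uR vR [_ [_ opp]]]]].
case=> [[i [k [p [j [q [ik ER ipk qj]]]]]] | [i [p [j [k [q [jk ER jqk pi]]]]]]];
  subst R; have := ltn_ord i; have := ltn_ord k; have := ltn_ord j; have := ltn_ord q.
- move=> *; have lt_ik : i < k by move: ik; rewrite -val_eqE /=; lia.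
  apply: row_landmarks_resolving => //.
  by move: opp; case/set3P: uR => ->; case/set3P: vR => -> /=; lia.
- move=> *; have lt_jk : j < k by move: jk; rewrite -val_eqE /=; lia.
  apply: col_landmarks_resolving => //.
  by move: opp; case/set3P: uR => ->; case/set3P: vR => -> /=; lia.
Qed.

Lemma minimal3_cond_i R : #|R| = 3 -> minimal R -> cond_i R.
Proof.
move=> R3 [resR minR]; apply/cond_iP => x y xR yR cx cy.
apply/eqP; apply: contraT => xy; exfalso.
have [same_side | [d1 d2]] :
    (x.1 == y.1 :> nat) || (x.2 == y.2 :> nat) \/ (x.1 != y.1 :> nat /\ x.2 != y.2 :> nat).
  by case: eqP; case: eqP; auto.
- have /card_gt0P[z] : 0 < #|R :\: [set x; y]|.
    by rewrite cardsD (setIidPr _) ?cards2 ?xy ?R3 //; apply/subsetP => w /set2P[]->.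
  rewrite !inE negb_or => /andP[/andP[zx zy] zR].
  apply: (minR z zR); apply: resolvingS (corner_pair_resolving cx cy xy same_side).
  by apply/subsetP => w /set2P[]->; rewrite !inE 1?eq_sym ?zx ?zy.
- apply: (minR y yR); apply: (resolving_setD1_dominated xR xy) resR => u v.
  rewrite /resolves; apply: contra_neq => dxy.
  have := gdist_opposite_corners u cx cy d1 d2.
  by have := gdist_opposite_corners v cx cy d1 d2; lia.
Qed.

Lemma cond_i_setD1_not_resolving R v : #|R| = 3 -> cond_i R -> v \in R -> ~ resolving (R :\ v).
Proof.
move=> R3 /cond_iP one vR.
have /cards2P[x [y [xy Exy]]] : #|R :\ v| == 2 by move: R3; rewrite (cardsD1 v) vR add1n => -[->].
have [xR yR] : x \in R /\ y \in R.
  have := subsetP (subsetDl R [set v]); rewrite Exy => sub.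
  by split; apply: sub; rewrite !inE eqxx ?orbT.
rewrite Exy => /(resolving_pair_corners xy)/andP[cx cy].
by move/eqP: xy; apply; apply: one.
Qed.

End Grid.

Theorem theorem2 (n m : nat) (Hn : 3 <= n) (Hm : 3 <= m)
  (M : {set vertex n m}) (HM : #|M| = 3) :
  k_minimal 3 M <-> (cond_i M /\ cond_ii M /\ cond_iii M).
Proof.
have [n_gt1 m_gt1] : 1 < n /\ 1 < m by split; [apply: leq_trans Hn | apply: leq_trans Hm].
split=> [[minM _] | [Ci [Cii Ciii]]].
  have Ci := minimal3_cond_i n_gt1 m_gt1 HM minM.
  have resM := minM.1.
  split=> //; split; first exact: resolving_cond_ii.
  have [a0 [b0 [c0 EM]]] := cards3P HM.
  have [a [b [c [Eabc sorted]]]] := set3_sorted (fun v : vertex n m => v.1 : nat) a0 b0 c0.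
  rewrite EM Eabc in HM Ci resM *.
  exact: resolving3_cond_iii.
split=> //; split; first exact: cond_iii_resolving.
by move=> v vM; apply: cond_i_setD1_not_resolving.
Qed.
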